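(* Let $\beta_1,\dots,\beta_N\in\mathbb R$ satisfy $(d-1)\sum_i\beta_i^2+(\sum_i\beta_i)^2=1$. Then the map $T_\beta$ is a quantum channel whose Choi matrix is $C_\beta$.
   Context: Fix $d\ge2$, $N\ge1$. For a permutation $\sigma$ of $\{0,\dots,n-1\}$, $\Pi_\sigma(v_0\otimes\cdots\otimes v_{n-1})=v_{\sigma^{-1}(0)}\otimes\cdots\otimes v_{\sigma^{-1}(n-1)}$ on $(\mathbb C^d)^{\otimes n}$. On $(\mathbb C^d)^{\otimes(N+1)}$ (factors $0,\dots,N$), $\Pi_\sigma^\Gamma$ is the partial transpose on factor $0$ and $\Sigma_{a,b}=\{\sigma:\sigma(0)=a,\sigma(b)=0\}$. Define $C_\beta=\frac{d}{\binom{N+d-1}{N}}\frac{N+d-1}{N}\sum_{1\le a,b\le N}\sum_{\sigma\in\Sigma_{a,b}}\frac{\beta_a\beta_b}{(N-1)!}\Pi_\sigma^\Gamma$. Let $P_\beta=\frac1{N!}\sum_{\sigma}\beta_{\sigma(0)+1}\Pi_\sigma$, summed over permutations $\sigma$ of $\{0,\dots,N-1\}$ (operators on $(\mathbb C^d)^{\otimes N}$), and $T_\beta(\rho)=\frac{dN(N+d-1)}{\binom{N+d-1}{N}}P_\beta(\rho\otimes I^{\otimes(N-1)})P_\beta^{\mathsf T}$, with ${}^{\mathsf T}$ the transpose in the standard basis. The Choi matrix of $T$ is $C_T=\sum_{i,j}|i\rangle\langle j|\otimes T(|i\rangle\langle j|)$; a quantum channel is a completely positive trace-preserving linear map. *)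

(* Complex scalars: an arbitrary numClosedFieldType C
   (e.g. C = R[i]); "real" numbers are the elements x with x \is Num.real. *)
From mathcomp Require Import all_boot all_order all_algebra all_fingroup.
From mathcomp Require Import mxtens.
Set Implicit Arguments. Unset Strict Implicit. Unset Printing Implicit Defensive.
Import Order.TTheory GRing.Theory Num.Theory.
Local Open Scope ring_scope.

Section QI.
Variable C : numClosedFieldType.
Variable d : nat.

(** Computational basis of (C^d)^{(x)n}: multi-indices x : {ffun 'I_n -> 'I_d},
    x k being the basis index of tensor factor k. *)
Definition midx (n : nat) := {ffun 'I_n -> 'I_d}.

(** Operators on (C^d)^{(x)n}, as square matrices indexed (via enum_rank) by
    the multi-indices. *)
Definition Op (n : nat) := 'M[C]_#|{: midx n}|.

Definition ent n (A : Op n) (y x : midx n) : C := A (enum_rank y) (enum_rank x).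

Definition mkop n (f : midx n -> midx n -> C) : Op n :=
  \matrix_(i, j) f (enum_val i) (enum_val j).

(** Pi_sigma (v_0 (x) ... (x) v_{n-1}) = v_{sigma^-1 0} (x) ... (x) v_{sigma^-1 (n-1)},
    i.e. Pi_sigma |x> = |x o sigma^-1>. *)
Definition Pi n (s : 'S_n) : Op n :=
  mkop (fun y x => (y == [ffun k => x ((s^-1)%g k)])%:R).

(** partial transpose on tensor factor 0 (of n.+1 factors) *)
Definition ptrans0 n (A : Op n.+1) : Op n.+1 :=
  mkop (fun y x => ent A [ffun k => if k == ord0 then x ord0 else y k]
                         [ffun k => if k == ord0 then y ord0 else x k]).

Definition mtail n (x : midx n.+1) : midx n := [ffun k => x (lift ord0 k)].

(** A (x) B, with A acting on factor 0 and B on factors 1..n *)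
Definition tens0 n (A : 'M[C]_d) (B : Op n) : Op n.+1 :=
  mkop (fun y x => A (y ord0) (x ord0) * ent B (mtail y) (mtail x)).

Definition choi n (T : 'M[C]_d -> Op n) : Op n.+1 :=
  \sum_(i < d) \sum_(j < d) tens0 (delta_mx i j) (T (delta_mx i j)).

(** C_beta (beta_1..beta_N is beta 0 .. beta (N-1); paper index a <-> a+1) *)
Definition Cbeta N (beta : 'I_N -> C) : Op N.+1 :=
  (d%:R / ('C(N + d - 1, N))%:R * ((N + d - 1)%:R / N%:R)) *:
  \sum_(a < N) \sum_(b < N)
     \sum_(s : 'S_N.+1 | (s ord0 == lift ord0 a) && (s (lift ord0 b) == ord0))
        (beta a * beta b / (N.-1)`!%:R) *: ptrans0 (Pi s).

(** P_beta = 1/N! sum_sigma beta_{sigma(0)+1} Pi_sigma ; o is the factor 0 *)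
Definition Pbeta N (hN : (0 < N)%N) (beta : 'I_N -> C) : Op N :=
  (N`!%:R)^-1 *: \sum_(s : 'S_N) beta (s (Ordinal hN)) *: Pi s.

(** rho (x) I^{(x)(N-1)}, rho on factor 0 *)
Definition ampI N (hN : (0 < N)%N) (rho : 'M[C]_d) : Op N :=
  let o := Ordinal hN in
  mkop (fun y x => rho (y o) (x o) *
                   [forall k : 'I_N, (k != o) ==> (y k == x k)]%:R).

Definition Tbeta N (hN : (0 < N)%N) (beta : 'I_N -> C) (rho : 'M[C]_d) : Op N :=
  ((d * N * (N + d - 1))%:R / ('C(N + d - 1, N))%:R) *:
  (Pbeta hN beta *m ampI hN rho *m (Pbeta hN beta)^T).

End QI.

Arguments Tbeta {C} d {N} hN beta rho.
Arguments Cbeta {C} d {N} beta.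
Arguments choi {C d n} T.

Definition adjmx (C : numClosedFieldType) m n (A : 'M[C]_(m, n)) : 'M[C]_(n, m) :=
  (map_mx Num.conj A)^T.

Definition psd (C : numClosedFieldType) n (A : 'M[C]_n) : Prop :=
  adjmx A = A /\ forall v : 'cV[C]_n, 0 <= (adjmx v *m A *m v) 0 0.

(** id_k (x) T applied to X on C^k (x) C^m (index (a,i) |-> a*m+i) *)
Definition ampl (C : numClosedFieldType) m n k (T : 'M[C]_m -> 'M[C]_n)
    (X : 'M[C]_(k * m)) : 'M[C]_(k * n) :=
  \matrix_(p, q)
    T (\matrix_(i, j) X (mxtens_index ((mxtens_unindex p).1, i))
                        (mxtens_index ((mxtens_unindex q).1, j)))
      (mxtens_unindex p).2 (mxtens_unindex q).2.

Definition linear_map (C : numClosedFieldType) m n (T : 'M[C]_m -> 'M[C]_n) :=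
  forall (a : C) (X Y : 'M[C]_m), T (a *: X + Y) = a *: T X + T Y.

Definition completely_positive (C : numClosedFieldType) m n
    (T : 'M[C]_m -> 'M[C]_n) :=
  forall (k : nat) (X : 'M[C]_(k * m)), psd X -> psd (ampl T X).

Definition trace_preserving (C : numClosedFieldType) m n
    (T : 'M[C]_m -> 'M[C]_n) := forall X : 'M[C]_m, \tr (T X) = \tr X.

Definition quantum_channel (C : numClosedFieldType) m n
    (T : 'M[C]_m -> 'M[C]_n) :=
  [/\ linear_map T, completely_positive T & trace_preserving T].

From mathcomp Require Import all_boot all_order all_algebra all_fingroup.
From mathcomp Require Import mxtens ring zify.
Set Implicit Arguments. Unset Strict Implicit. Unset Printing Implicit Defensive.
Import Order.TTheory GRing.Theory Num.Theory.
Local Open Scope ring_scope.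

(* Every entry of P_beta A P_beta^T is a double sum over sigma, tau in S_N.
   For A = rho (x) I, substituting sigma = tau r makes the summand depend on
   tau only through b = tau(0), leaving a sum over r in S_N of
   beta_{r b} beta_b rho_{y(r b), x(b)} over the basis vectors y, x such that
   y o r and x agree off b.
   - Trace: for x = y these are the colourings of N points with d colours
     fixed by r.  Burnside's count sum_r #Fix(r) = N! C(N+d-1, N) and the
     normalisation (d-1) sum beta_i^2 + (sum beta_i)^2 = 1 then give
     tr T(rho) = tr rho.
   - Choi matrix: the sigma in Sigma_{a,b} are the (0 b) lift(r), r in S_N,
     and the entries of Pi_sigma^Gamma match the collapsed sum term by term.
   - Complete positivity: fixing all tensor factors but the first one,
     T(rho) = c sum_w K_w rho K_w^T with real matrices K_w. *)

Section OperatorEntries.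
Variables (C : numClosedFieldType) (d : nat).
Local Notation midx := (midx d).
Local Notation Op := (@Op C d).
Local Notation ent := (@ent C d).

Lemma ent_mkop n (f : midx n -> midx n -> C) y x : ent (mkop f) y x = f y x.
Proof. by rewrite /ent /mkop mxE !enum_rankK. Qed.

Lemma mxE_ent n (A : Op n) i j : A i j = ent A (enum_val i) (enum_val j).
Proof. by rewrite /ent !enum_valK. Qed.

Lemma op_ext n (A B : Op n) : (forall y x, ent A y x = ent B y x) -> A = B.
Proof. by move=> eqAB; apply/matrixP => i j; rewrite !mxE_ent eqAB. Qed.

Lemma entD n (A B : Op n) y x : ent (A + B) y x = ent A y x + ent B y x.
Proof. by rewrite /ent mxE. Qed.

Lemma entZ n a (A : Op n) y x : ent (a *: A) y x = a * ent A y x.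
Proof. by rewrite /ent mxE. Qed.

Lemma ent_sum n I (r : seq I) (P : pred I) (F : I -> Op n) y x :
  ent (\sum_(i <- r | P i) F i) y x = \sum_(i <- r | P i) ent (F i) y x.
Proof. by rewrite /ent summxE. Qed.

Lemma entM n (A B : Op n) y x : ent (A *m B) y x = \sum_z ent A y z * ent B z x.
Proof.
rewrite /ent mxE (reindex (@enum_rank _)) //.
by exists enum_val => z _; rewrite ?enum_rankK ?enum_valK.
Qed.

Lemma ent_trmx n (A : Op n) y x : ent A^T y x = ent A x y.
Proof. by rewrite /ent mxE. Qed.

Lemma mxtrace_ent n (A : Op n) : \tr A = \sum_y ent A y y.
Proof.
rewrite /mxtrace (reindex (@enum_rank _)) //.
by exists enum_val => z _; rewrite ?enum_rankK ?enum_valK.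
Qed.

Definition permute n (y : midx n) (s : 'S_n) : midx n := [ffun k => y (s k)].

Lemma ent_Pi n (s : 'S_n) y x : ent (Pi C d s) y x = (x == permute y s)%:R.
Proof.
rewrite /Pi ent_mkop; congr (nat_of_bool _)%:R.
by apply/eqP/eqP => ->; apply/ffunP => k; rewrite !ffunE ?permK ?permKV.
Qed.

Lemma sum_ent_Pi n (s : 'S_n) (g : midx n -> C) y :
  \sum_x ent (Pi C d s) y x * g x = g (permute y s).
Proof.
rewrite (bigD1 (permute y s)) //= ent_Pi eqxx mul1r big1 ?addr0 // => x /negbTE.
by rewrite ent_Pi => ->; rewrite mul0r.
Qed.

Lemma ent_ptrans0 n (A : Op n.+1) y x :
  ent (ptrans0 A) y x =
  ent A [ffun k => if k == ord0 then x ord0 else y k]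
        [ffun k => if k == ord0 then y ord0 else x k].
Proof. by rewrite /ptrans0 ent_mkop. Qed.

Lemma ent_ampI N (hN : (0 < N)%N) (rho : 'M[C]_d) y x :
  ent (ampI hN rho) y x =
  rho (y (Ordinal hN)) (x (Ordinal hN)) *
  [forall k : 'I_N, (k != Ordinal hN) ==> (y k == x k)]%:R.
Proof. exact: ent_mkop. Qed.

Lemma ent_choi n (T : 'M[C]_d -> Op n) (y x : midx n.+1) :
  ent (choi T) y x = ent (T (delta_mx (y ord0) (x ord0))) (mtail y) (mtail x).
Proof.
rewrite /choi ent_sum.
under eq_bigr => i _ do
  (rewrite ent_sum; under eq_bigr => j _ do rewrite /tens0 ent_mkop mxE).
rewrite (bigD1 (y ord0)) //= (bigD1 (x ord0)) //= !eqxx mul1r.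
rewrite big1 ?addr0; last by move=> j /negbTE ne; rewrite eq_sym ne mul0r.
rewrite big1 ?addr0 // => i /negbTE ne; rewrite big1 // => j _.
by rewrite eq_sym ne mul0r.
Qed.

End OperatorEntries.

Section PermutationSums.

Lemma big_perm_at (R : Type) (idx : R) (op : Monoid.com_law idx) n
    (i j : 'I_n.+1) (F : 'S_n.+1 -> R) :
  \big[op/idx]_(s : 'S_n.+1 | s i == j) F s =
  \big[op/idx]_(p : 'S_n) F (lift_perm i j p).
Proof.
rewrite (reindex (lift_perm i j)); last first.
  pose ulsf i (s : 'S_n.+1) k := odflt k (unlift (s i) (s (lift i k))).
  have ulsfK i' (s : 'S_n.+1) k: lift (s i') (ulsf i' s k) = s (lift i' k).
    rewrite /ulsf; have:= neq_lift i' k.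
    by rewrite -(can_eq (permK s)) => /unlift_some[] ? ? ->.
  have inj_ulsf: injective (ulsf i _).
    move=> s; apply: can_inj (ulsf (s i) s^-1%g) _ => k'.
    by rewrite {1}/ulsf ulsfK !permK liftK.
  exists (fun s => perm (inj_ulsf s)) => [s _ | s].
    by apply/permP=> k'; rewrite permE /ulsf lift_perm_lift lift_perm_id liftK.
  move/(s _ =P _) => si0; apply/permP=> k.
  case: (unliftP i k) => [k'|] ->; rewrite ?lift_perm_id //.
  by rewrite lift_perm_lift -si0 permE ulsfK.
by apply: eq_bigl => p; rewrite lift_perm_id eqxx.
Qed.

Lemma big_perm_tperm (R : Type) (idx : R) (op : Monoid.com_law idx) n
    (b j : 'I_n.+1) (H : 'S_n.+1 -> R) :
  \big[op/idx]_(s : 'S_n.+1 | s b == j) H s =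
  \big[op/idx]_(p : 'S_n) H (lift_perm b b p * tperm b j)%g.
Proof.
rewrite (reindex_inj (mulIg (tperm b j))) /=.
rewrite (eq_bigl (fun s : 'S_n.+1 => s b == b)); last first.
  move=> s; rewrite permM; apply/eqP/eqP => [|->]; last by rewrite tpermL.
  by move/(congr1 (tperm b j)); rewrite tpermK tpermR.
exact: (big_perm_at _ _ _ (fun s => H (s * tperm b j)%g)).
Qed.

Lemma big_perm_by_image (R : Type) (idx : R) (op : Monoid.com_law idx) n
    (b : 'I_n.+1) (H : 'S_n.+1 -> R) :
  \big[op/idx]_(s : 'S_n.+1) H s =
  \big[op/idx]_j \big[op/idx]_(p : 'S_n) H (lift_perm b b p * tperm b j)%g.
Proof.
rewrite (partition_big (fun s : 'S_n.+1 => s b) predT) //=.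
by apply: eq_bigr => j _; rewrite -big_perm_tperm; apply: eq_bigl.
Qed.

Variable V : nmodType.

Lemma sum_perm_eval n (i : 'I_n.+1) (Phi : 'I_n.+1 -> V) :
  \sum_(t : 'S_n.+1) Phi (t i) = (\sum_b Phi b) *+ n`!.
Proof.
rewrite -sumrMnl (partition_big (fun t : 'S_n.+1 => t i) predT) //.
apply: eq_bigr => b _.
rewrite (eq_bigl (fun t : 'S_n.+1 => t i == b)) //.
rewrite (eq_bigr (fun _ => Phi b)); last by move=> t /eqP ->.
by rewrite big_perm_at sumr_const card_Sn.
Qed.

Lemma sum_perm_to0 n (b : 'I_n.+1) (H : 'S_n.+2 -> V) :
  \sum_(s : 'S_n.+2 | s (lift ord0 b) == ord0) H s =
  \sum_(r : 'S_n.+1) H (tperm ord0 (lift ord0 b) * lift_perm ord0 ord0 r)%g.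
Proof.
rewrite (reindex_inj (mulgI (tperm ord0 (lift ord0 b)))) /=.
rewrite (eq_bigl (fun s : 'S_n.+2 => s ord0 == ord0)); last first.
  by move=> s; rewrite permM tpermR.
exact: (big_perm_at _ _ _ (fun s => H (tperm ord0 (lift ord0 b) * s)%g)).
Qed.

Lemma sum_Sigma n (b : 'I_n.+1) (f : 'I_n.+1 -> 'S_n.+2 -> V) :
  \sum_a \sum_(s : 'S_n.+2 | (s ord0 == lift ord0 a) && (s (lift ord0 b) == ord0))
     f a s
  = \sum_(r : 'S_n.+1) f (r b) (tperm ord0 (lift ord0 b) * lift_perm ord0 ord0 r)%g.
Proof.
transitivity (\sum_(s : 'S_n.+2 | s (lift ord0 b) == ord0)
                \sum_a (if s ord0 == lift ord0 a then f a s else 0)).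
  rewrite [RHS]big_mkcond /=.
  under eq_bigr => a _ do rewrite big_mkcond /=.
  rewrite exchange_big /=; apply: eq_bigr => s _.
  case: (s (lift ord0 b) == ord0) => /=.
    by apply: eq_bigr => a _; rewrite andbT.
  by rewrite big1 // => a _; rewrite andbF.
rewrite sum_perm_to0; apply: eq_bigr => r _.
rewrite (bigD1 (r b)) //= permM tpermL lift_perm_lift eqxx big1 ?addr0 //.
by move=> a nab; rewrite (inj_eq (@lift_inj _ _)) eq_sym (negbTE nab).
Qed.

End PermutationSums.

Lemma forall_perm n (t : 'S_n) (Q : pred 'I_n) :
  [forall k, Q (t k)] = [forall m, Q m].
Proof.
apply/forallP/forallP => H m; last exact: H.
by have := H (t^-1 m)%g; rewrite permKV.
Qed.

Section Sandwich.
Variables (C : numClosedFieldType) (d : nat).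
Local Notation midx := (midx d).
Local Notation Op := (@Op C d).
Local Notation ent := (@ent C d).

Lemma sum_ent_Pbeta N (hN : (0 < N)%N) (beta : 'I_N -> C) (g : midx N -> C) y :
  \sum_x ent (Pbeta d hN beta) y x * g x =
  (N`!%:R)^-1 * \sum_(s : 'S_N) beta (s (Ordinal hN)) * g (permute y s).
Proof.
under eq_bigr => x _ do rewrite /Pbeta entZ ent_sum -mulrA big_distrl /=.
rewrite -big_distrr /= exchange_big /=; congr (_ * _); apply: eq_bigr => s _.
rewrite -sum_ent_Pi big_distrr /=; apply: eq_bigr => x _.
by rewrite entZ mulrA.
Qed.

Lemma ent_sandwich_Pbeta N (hN : (0 < N)%N) (beta : 'I_N -> C) (A : Op N) y x :
  ent (Pbeta d hN beta *m A *m (Pbeta d hN beta)^T) y x =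
  (N`!%:R)^-1 * (N`!%:R)^-1 * \sum_(s : 'S_N) \sum_(t : 'S_N)
     beta (s (Ordinal hN)) * beta (t (Ordinal hN)) *
     ent A (permute y s) (permute x t).
Proof.
rewrite entM.
under eq_bigr => z _ do rewrite ent_trmx entM mulrC.
rewrite sum_ent_Pbeta.
under eq_bigr => t _ do rewrite sum_ent_Pbeta.
rewrite -mulrA; congr (_ * _).
rewrite exchange_big big_distrr /=; apply: eq_bigr => t _.
rewrite mulrCA; congr (_ * _); rewrite big_distrr /=; apply: eq_bigr => s _.
by rewrite mulrCA mulrA.
Qed.

Lemma ent_ampI_permute N (hN : (0 < N)%N) (M : 'M[C]_d) (y x : midx N)
    (t r : 'S_N) :
  ent (ampI hN M) (permute y (t * r)) (permute x t) =
  M (y (r (t (Ordinal hN)))) (x (t (Ordinal hN))) *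
  [forall m, (m != t (Ordinal hN)) ==> (y (r m) == x m)]%:R.
Proof.
rewrite ent_ampI !ffunE !permM; congr (_ * (nat_of_bool _)%:R).
rewrite -(forall_perm t (fun m => (m != t _) ==> (y (r m) == x m))).
by apply: eq_forallb => k /=; rewrite !ffunE permM (inj_eq perm_inj).
Qed.

Lemma sandwich_ampI_collapse n (hN : (0 < n.+1)%N) (beta : 'I_n.+1 -> C)
    (M : 'M[C]_d) (y x : midx n.+1) :
  \sum_(s : 'S_n.+1) \sum_(t : 'S_n.+1)
     beta (s (Ordinal hN)) * beta (t (Ordinal hN)) *
     ent (ampI hN M) (permute y s) (permute x t) =
  (\sum_b \sum_(r : 'S_n.+1) beta (r b) * beta b * M (y (r b)) (x b) *
     [forall m, (m != b) ==> (y (r m) == x m)]%:R) *+ n`!.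
Proof.
rewrite exchange_big /= -(sum_perm_eval (Ordinal hN)); apply: eq_bigr => t _.
rewrite (reindex_inj (mulgI t)) /=; apply: eq_bigr => r _.
by rewrite ent_ampI_permute permM !mulrA.
Qed.

End Sandwich.

Section FixedColourings.
Variable d : nat.
Local Notation midx := (midx d).

Definition fixcol n (r : 'S_n) (y : midx n) := [forall m, y (r m) == y m].

Definition nfixcol n (r : 'S_n) := (\sum_(y : midx n) fixcol r y)%N.

(* y o r and y take every colour equally often. *)
Lemma fixcol_last n (r : 'S_n) (y : midx n) b :
  (forall m, m != b -> y (r m) = y m) -> y (r b) = y b.
Proof.
move=> Hy.
have E : (\sum_m (y (r m) == y b) = \sum_m (y m == y b))%N.
  by rewrite [RHS](reindex_inj (@perm_inj _ r)).
move: E; rewrite (bigD1 b) //= [X in _ = X](bigD1 b) //= eqxx.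
rewrite (eq_bigr (fun m => (y m == y b) : nat)); last by move=> m /Hy ->.
by move/addIn; case: eqP.
Qed.

Lemma fixcol_off1 n (r : 'S_n) (y : midx n) b :
  [forall m, (m != b) ==> (y (r m) == y m)] = fixcol r y.
Proof.
apply/forallP/forallP => Hy m; last by apply/implyP.
case: (eqVneq m b) => [->|nmb]; last by have := Hy m; rewrite nmb.
by apply/eqP/fixcol_last => k nkb; have := Hy k; rewrite nkb => /eqP.
Qed.

Definition minsert n (b : 'I_n.+1) (v : 'I_d) (y : midx n) : midx n.+1 :=
  [ffun m => if unlift b m is Some k then y k else v].

Lemma minsert_b n b v (y : midx n) : minsert b v y b = v.
Proof. by rewrite ffunE unlift_none. Qed.

Lemma minsert_lift n b v (y : midx n) k : minsert b v y (lift b k) = y k.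
Proof. by rewrite ffunE liftK. Qed.

Lemma sum_minsert (V : nmodType) n (b : 'I_n.+1) (F : midx n.+1 -> V) :
  \sum_(y : midx n.+1) F y = \sum_(y : midx n) \sum_(v : 'I_d) F (minsert b v y).
Proof.
rewrite pair_big /= (reindex (fun p : midx n * 'I_d => minsert b p.2 p.1)) //.
exists (fun y : midx n.+1 => ([ffun k => y (lift b k)], y b)) => [[y v] _|y _] /=.
  by congr (_, _); [apply/ffunP => k; rewrite !ffunE liftK | rewrite minsert_b].
apply/ffunP => m; rewrite ffunE.
by case: (unliftP b m) => [k|] ->; rewrite ?ffunE.
Qed.

Lemma fixcol_lift_tperm n (p : 'S_n) (b j : 'I_n.+1) (y : midx n) v :
  fixcol (lift_perm b b p * tperm b j)%g (minsert b v y) =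
  fixcol p y && (if unlift b j is Some j0 then y j0 == v else true).
Proof.
set Y := minsert b v y.
have eYj : (Y j == Y b) = (if unlift b j is Some j0 then y j0 == v else true).
  by rewrite /Y minsert_b ffunE; case: (unlift b j) => [k|]; rewrite ?eqxx.
have fixL : fixcol (lift_perm b b p) Y = fixcol p y.
  apply/forallP/forallP => Hy m.
    by have := Hy (lift b m); rewrite lift_perm_lift !minsert_lift.
  case: (unliftP b m) => [k|] ->; first by rewrite lift_perm_lift !minsert_lift.
  by rewrite lift_perm_id.
have YtpermE z : Y j = Y b -> Y (tperm b j z) = Y z by case: tpermP => [->|->|].
rewrite -eYj -fixL; apply/idP/andP => [Hr|[Hp /eqP e]].
  have e : Y j = Y b.
    by have := forallP Hr b; rewrite permM lift_perm_id tpermL => /eqP.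
  split; last by rewrite e.
  by apply/forallP => m; have := forallP Hr m; rewrite permM YtpermE.
by apply/forallP => m; rewrite permM YtpermE //; apply: forallP Hp m.
Qed.

Lemma nfixcol_lift_tperm n (p : 'S_n) (b j : 'I_n.+1) :
  nfixcol (lift_perm b b p * tperm b j)%g = (nfixcol p * (if j == b then d else 1))%N.
Proof.
rewrite /nfixcol (sum_minsert b) big_distrl /=; apply: eq_bigr => y _.
under eq_bigr => v _ do rewrite fixcol_lift_tperm.
case: (eqVneq j b) => [->|njb].
  rewrite unlift_none; under eq_bigr => v _ do rewrite andbT.
  by rewrite sum_nat_const card_ord mulnC.
rewrite eq_sym in njb; have [j0 _ ->] := unlift_some njb.
case: (fixcol p y) => /=; last by rewrite big1.
by rewrite (bigD1 (y j0)) //= eqxx big1 // => v; rewrite eq_sym => /negbTE ->.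
Qed.

Lemma sum_nfixcolS n :
  (\sum_(r : 'S_n.+1) nfixcol r = (\sum_(p : 'S_n) nfixcol p) * (d + n))%N.
Proof.
rewrite (big_perm_by_image _ ord0).
under eq_bigr => j _ do under eq_bigr => p _ do rewrite nfixcol_lift_tperm.
under eq_bigr => j _ do rewrite -big_distrl /=.
rewrite -big_distrr /=; congr (_ * _)%N.
rewrite (bigD1 ord0) //= ?eqxx (eq_bigr (fun _ => 1%N)); last by move=> j /negbTE ->.
by rewrite sum_nat_const /= cardC1 card_ord muln1; lia.
Qed.

(* Burnside: the orbits of S_n on colourings are the multisets of n colours. *)
Lemma sum_nfixcol n : (0 < d)%N ->
  (\sum_(r : 'S_n) nfixcol r = n`! * 'C(n + d - 1, n))%N.
Proof.
move=> d_gt0; elim: n => [|n IHn].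
  rewrite (eq_bigr (fun _ => 1%N)) ?sum_nat_const ?card_Sn ?bin0 // => r _.
  rewrite /nfixcol (eq_bigr (fun _ => 1%N)) ?sum_nat_const ?card_ffun ?card_ord //.
  by move=> y _; rewrite (_ : fixcol r y = true) //; apply/forallP => -[].
rewrite sum_nfixcolS IHn factS.
have := mul_bin_diag (n + d) n.
have -> : (n + d).-1 = (n + d - 1)%N by lia.
have -> : (n.+1 + d - 1 = n + d)%N by lia.
by move=> h; nia.
Qed.

Lemma card_fixcol_colour n (p : 'S_n) (j0 : 'I_n) (v w : 'I_d) :
  (\sum_(y : midx n) (fixcol p y && (y j0 == v)) =
   \sum_(y : midx n) (fixcol p y && (y j0 == w)))%N.
Proof.
pose h (y : midx n) : midx n := [ffun k => tperm v w (y k)].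
have hK : involutive h by move=> y; apply/ffunP => k; rewrite !ffunE tpermK.
rewrite [RHS](reindex_inj (inv_inj hK)); apply: eq_bigr => y _.
congr (nat_of_bool _); congr andb.
  by apply: eq_forallb => m; rewrite !ffunE (inj_eq perm_inj).
rewrite ffunE; apply/eqP/eqP => [->|e]; first by rewrite tpermL.
by rewrite -(tpermK v w (y j0)) e tpermR.
Qed.

Lemma sum_fixcol_colour (C : numClosedFieldType) n (p : 'S_n) (j0 : 'I_n)
    (f : 'I_d -> C) :
  d%:R * \sum_(y : midx n) (fixcol p y)%:R * f (y j0) = (\sum_v f v) * (nfixcol p)%:R.
Proof.
pose cnt v := (\sum_(y : midx n) (fixcol p y && (y j0 == v)))%N.
have splitE y : (fixcol p y)%:R * f (y j0) =
                \sum_v (fixcol p y && (y j0 == v))%:R * f v.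
  rewrite (bigD1 (y j0)) //= eqxx andbT big1 ?addr0 // => v nv.
  by rewrite eq_sym (negbTE nv) andbF mul0r.
have nfixcolE w : nfixcol p = (cnt w * d)%N.
  transitivity (\sum_(v < d) cnt v)%N.
    rewrite /nfixcol /cnt exchange_big /=; apply: eq_bigr => y _.
    case: (fixcol p y) => /=; last by rewrite big1.
    by rewrite (bigD1 (y j0)) //= eqxx big1 // => u; rewrite eq_sym => /negbTE ->.
  rewrite (eq_bigr (fun _ => cnt w)); last by move=> v _; apply: card_fixcol_colour.
  by rewrite sum_nat_const card_ord mulnC.
rewrite (eq_bigr _ (fun y _ => splitE y)) exchange_big /= big_distrr big_distrl /=.
apply: eq_bigr => v _.
by rewrite (nfixcolE v) natrM -big_distrl /= /cnt natr_sum; ring.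
Qed.

End FixedColourings.

Section Psd.
Variable C : numClosedFieldType.

Lemma adjmxE m n (A : 'M[C]_(m, n)) i j : adjmx A i j = (A j i)^*.
Proof. by rewrite /adjmx !mxE. Qed.

Lemma adjmxM m n p (A : 'M[C]_(m, n)) (B : 'M[C]_(n, p)) :
  adjmx (A *m B) = adjmx B *m adjmx A.
Proof.
apply/matrixP => i j; rewrite adjmxE !mxE rmorph_sum /=.
by apply: eq_bigr => k _; rewrite rmorphM /= !adjmxE mulrC.
Qed.

Lemma adjmxK m n (A : 'M[C]_(m, n)) : adjmx (adjmx A) = A.
Proof. by apply/matrixP => i j; rewrite !adjmxE conjCK. Qed.

Lemma adjmxD m n (A B : 'M[C]_(m, n)) : adjmx (A + B) = adjmx A + adjmx B.
Proof. by apply/matrixP => i j; rewrite /adjmx !mxE rmorphD. Qed.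

Lemma adjmxZ m n a (A : 'M[C]_(m, n)) : adjmx (a *: A) = a^* *: adjmx A.
Proof. by apply/matrixP => i j; rewrite /adjmx !mxE rmorphM. Qed.

Lemma psd0 n : psd (0 : 'M[C]_n).
Proof.
split; first by apply/matrixP => i j; rewrite adjmxE !mxE rmorph0.
by move=> v; rewrite mulmx0 mul0mx mxE.
Qed.

Lemma psdD n (A B : 'M[C]_n) : psd A -> psd B -> psd (A + B).
Proof.
move=> [hA qA] [hB qB]; split; first by rewrite adjmxD hA hB.
by move=> v; rewrite mulmxDr mulmxDl mxE addr_ge0.
Qed.

Lemma psd_sum n I (r : seq I) (P : pred I) (F : I -> 'M[C]_n) :
  (forall i, P i -> psd (F i)) -> psd (\sum_(i <- r | P i) F i).
Proof. by move=> psdF; elim/big_ind: _ => //; [exact: psd0 | exact: psdD]. Qed.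

Lemma psdZ n (a : C) (A : 'M[C]_n) : 0 <= a -> psd A -> psd (a *: A).
Proof.
move=> a_ge0 [hA qA]; split; first by rewrite adjmxZ hA conj_Creal // ger0_real.
by move=> v; rewrite -scalemxAr -scalemxAl mxE mulr_ge0.
Qed.

Lemma psd_congr m n (B : 'M[C]_(m, n)) (X : 'M[C]_n) :
  psd X -> psd (B *m X *m adjmx B).
Proof.
move=> [hX qX]; split; first by rewrite !adjmxM adjmxK hX mulmxA.
by move=> v; have := qX (adjmx B *m v); rewrite adjmxM adjmxK !mulmxA.
Qed.

End Psd.

Lemma sum_mxtens_index (V : nmodType) m n (F : 'I_(m * n) -> V) :
  \sum_(a : 'I_(m * n)) F a =
  \sum_(a1 : 'I_m) \sum_(a2 : 'I_n) F (mxtens_index (a1, a2)).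
Proof.
rewrite pair_big /= (reindex (@mxtens_index m n)) /=.
  by apply: eq_bigr => -[a1 a2].
by exists (@mxtens_unindex m n) => a _; rewrite ?mxtens_indexK ?mxtens_unindexK.
Qed.

Section Tbeta.
Variables (C : numClosedFieldType) (d : nat).
Hypothesis d_gt0 : (0 < d)%N.
Local Notation midx := (midx d).
Local Notation Op := (@Op C d).
Local Notation ent := (@ent C d).
Local Notation nfixcol := (nfixcol d).

Let d_neq0 : (d%:R : C) != 0.
Proof. by rewrite pnatr_eq0 -lt0n. Qed.

Section SigmaPerm.
Variables (n : nat) (b : 'I_n.+1) (r : 'S_n.+1).
Let s := (tperm ord0 (lift ord0 b) * lift_perm ord0 ord0 r)%g.

Lemma Sigma_perm0 : s ord0 = lift ord0 (r b).
Proof. by rewrite permM tpermL lift_perm_lift. Qed.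

Lemma Sigma_perm_b : s (lift ord0 b) = ord0.
Proof. by rewrite permM tpermR lift_perm_id. Qed.

Lemma Sigma_perm_lift k : k != b -> s (lift ord0 k) = lift ord0 (r k).
Proof.
move=> nkb; rewrite permM tpermD ?lift_perm_lift // ?lift_eqF //.
by rewrite (inj_eq (@lift_inj _ _)) eq_sym.
Qed.

Lemma ptrans0_Pi_Sigma (y x : midx n.+2) :
  ([ffun k => if k == ord0 then y ord0 else x k] ==
   permute [ffun k => if k == ord0 then x ord0 else y k] s) =
  [&& mtail y (r b) == y ord0, mtail x b == x ord0 &
      [forall m, (m != b) ==> (mtail y (r m) == mtail x m)]].
Proof.
rewrite /mtail; apply/eqP/and3P => [E|[/eqP e1 /eqP e2 /forallP e3]].
  have Ek k := congr1 (fun f : midx n.+2 => f k) E.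
  split; rewrite ?ffunE.
  - by have := Ek ord0; rewrite /= !ffunE eqxx Sigma_perm0 lift_eqF => ->.
  - by have := Ek (lift ord0 b); rewrite /= !ffunE Sigma_perm_b eqxx lift_eqF => ->.
  - apply/forallP => m; apply/implyP => nmb; rewrite !ffunE.
    by have := Ek (lift ord0 m); rewrite /= !ffunE Sigma_perm_lift // !lift_eqF => ->.
apply/ffunP => k; rewrite !ffunE.
case: (unliftP ord0 k) => [m|] ->; last by rewrite eqxx Sigma_perm0 lift_eqF -e1 ffunE.
rewrite lift_eqF; case: (eqVneq m b) => [->|nmb].
  by rewrite Sigma_perm_b eqxx -e2 ffunE.
by rewrite Sigma_perm_lift // lift_eqF; move: (implyP (e3 m) nmb); rewrite !ffunE => /eqP.
Qed.

End SigmaPerm.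

Definition choi_coef N : C := d%:R / ('C(N + d - 1, N))%:R * ((N + d - 1)%:R / N%:R).

Lemma ent_Cbeta n (beta : 'I_n.+1 -> C) (y x : midx n.+2) :
  ent (Cbeta d beta) y x = choi_coef n.+1 * ((n`!%:R)^-1 *
    \sum_b \sum_(r : 'S_n.+1) beta (r b) * beta b *
      delta_mx (y ord0) (x ord0) (mtail y (r b)) (mtail x b) *
      [forall m, (m != b) ==> (mtail y (r m) == mtail x m)]%:R).
Proof.
rewrite /Cbeta entZ ent_sum; congr (_ * _).
under eq_bigr => a _ do rewrite ent_sum.
under eq_bigr => a _ do under eq_bigr => b _ do rewrite ent_sum.
rewrite exchange_big /= big_distrr /=; apply: eq_bigr => b _.
rewrite sum_Sigma big_distrr /=; apply: eq_bigr => r _.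
by rewrite entZ ent_ptrans0 ent_Pi ptrans0_Pi_Sigma mxE andbA -mulnb natrM /=; ring.
Qed.

Definition Tbeta_coef N : C :=
  (d * N * (N + d - 1))%:R / ('C(N + d - 1, N))%:R.

Lemma Tbeta_choi_coef n :
  Tbeta_coef n.+1 * (((n.+1)`!%:R)^-1 * ((n.+1)`!%:R)^-1 * n`!%:R) =
  choi_coef n.+1 / n`!%:R.
Proof.
have hB : ('C(n.+1 + d - 1, n.+1)%:R : C) != 0.
  by rewrite pnatr_eq0 -lt0n bin_gt0; lia.
have hF : (n`!%:R : C) != 0 by rewrite pnatr_eq0 -lt0n fact_gt0.
rewrite /Tbeta_coef /choi_coef factS !natrM; field.
by rewrite hB hF addrC natr1 pnatr_eq0.
Qed.

Lemma choi_Tbeta n (hN : (0 < n.+1)%N) (beta : 'I_n.+1 -> C) :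
  choi (Tbeta d hN beta) = Cbeta d beta.
Proof.
apply: op_ext => y x.
rewrite ent_choi /Tbeta entZ ent_sandwich_Pbeta sandwich_ampI_collapse ent_Cbeta.
rewrite -mulr_natr; set S := \sum_b _.
transitivity (Tbeta_coef n.+1 *
  (((n.+1)`!%:R)^-1 * ((n.+1)`!%:R)^-1 * n`!%:R) * S); first by rewrite /Tbeta_coef; ring.
by rewrite Tbeta_choi_coef; ring.
Qed.

Lemma Tbeta_trace_coef n :
  Tbeta_coef n.+1 * (((n.+1)`!%:R)^-1 * ((n.+1)`!%:R)^-1 * n`!%:R) *
    (n`! * 'C(n + d - 1, n))%:R = d%:R.
Proof.
rewrite /Tbeta_coef (_ : (n.+1 + d - 1 = n + d)%N); last by lia.
have binE := mul_bin_diag (n + d) n.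
rewrite (_ : (n + d).-1 = (n + d - 1)%N) in binE; last by lia.
have hnd : ((n + d)%:R : C) != 0 by rewrite pnatr_eq0; lia.
have hC : ('C(n + d - 1, n)%:R : C) = n.+1%:R * 'C(n + d, n.+1)%:R / (n + d)%:R.
  by rewrite -!natrM -binE natrM mulrAC divff // mul1r.
have hB : ('C(n + d, n.+1)%:R : C) != 0 by rewrite pnatr_eq0 -lt0n bin_gt0; lia.
have hF : (n`!%:R : C) != 0 by rewrite pnatr_eq0 -lt0n fact_gt0.
rewrite factS !natrM hC; field.
by rewrite hB hF -natrD hnd /= addrC natr1 pnatr_eq0.
Qed.

Lemma ampI_fixcol_weight n (X : 'M[C]_d) (r : 'S_n) (y : midx n) b :
  X (y (r b)) (y b) * [forall m, (m != b) ==> (y (r m) == y m)]%:R =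
  X (y b) (y b) * (fixcol r y)%:R.
Proof.
rewrite fixcol_off1; case fix_y: (fixcol r y); last by rewrite !mulr0.
by have /eqP -> := forallP fix_y b.
Qed.

(* A colouring fixed by (lift_perm b b p) (b j) is one fixed by p, extended
   at b by any colour if j = b and by the colour of j otherwise. *)
Lemma sum_diag_fixcol n (b j : 'I_n.+1) (p : 'S_n) (X : 'M[C]_d) :
  \sum_(y : midx n.+1) X (y b) (y b) * (fixcol (lift_perm b b p * tperm b j)%g y)%:R
  = \tr X * (nfixcol p)%:R * (if j == b then 1 else d%:R^-1).
Proof.
rewrite (sum_minsert b).
under eq_bigr => y _ do under eq_bigr => v _ do rewrite minsert_b fixcol_lift_tperm.
case: (eqVneq j b) => [->|njb].
  rewrite unlift_none mulr1 /nfixcol natr_sum big_distrr /=.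
  apply: eq_bigr => y _; under eq_bigr => v _ do rewrite andbT.
  by rewrite -big_distrl /= mulrC.
rewrite eq_sym in njb; have [j0 _ ->] := unlift_some njb.
have -> : \sum_(y : midx n) \sum_v X v v * (fixcol p y && (y j0 == v))%:R =
          \sum_(y : midx n) (fixcol p y)%:R * X (y j0) (y j0).
  apply: eq_bigr => y _.
  rewrite (bigD1 (y j0)) //= eqxx andbT mulrC big1 ?addr0 // => v nv.
  by rewrite eq_sym (negbTE nv) andbF mulr0.
apply: (mulfI d_neq0); rewrite (sum_fixcol_colour p j0 (fun v => X v v)) /mxtrace.
by field.
Qed.

Lemma sum_perm_diag_fixcol n (beta : 'I_n.+1 -> C) (X : 'M[C]_d) b :
  \sum_(r : 'S_n.+1) beta (r b) * beta b *
     \sum_(y : midx n.+1) X (y b) (y b) * (fixcol r y)%:R =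
  \tr X * (\sum_(p : 'S_n) nfixcol p)%:R *
     \sum_j beta j * beta b * (if j == b then 1 else d%:R^-1).
Proof.
rewrite (big_perm_by_image _ b) big_distrr /=; apply: eq_bigr => j _.
under eq_bigr => p _ do rewrite sum_diag_fixcol permM lift_perm_id tpermL.
rewrite natr_sum mulrAC big_distrr /=; apply: eq_bigr => p _.
by set w := (if _ then _ else _); ring.
Qed.

Lemma beta_pair_weight n (beta : 'I_n.+1 -> C) :
  (d%:R - 1) * (\sum_i beta i ^+ 2) + (\sum_i beta i) ^+ 2 = 1 ->
  \sum_b \sum_j beta j * beta b * (if j == b then 1 else d%:R^-1) = d%:R^-1.
Proof.
move=> norm1.
have weightE j b : (if j == b then 1 else d%:R^-1 : C) =
                   d%:R^-1 + (j == b)%:R * (1 - d%:R^-1).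
  by case: eqP => _; rewrite ?mul1r ?mul0r ?addr0 // addrC subrK.
under eq_bigr => b _ do under eq_bigr => j _ do rewrite weightE mulrDr.
under eq_bigr => b _ do rewrite big_split /=.
rewrite big_split /=.
have -> : \sum_b \sum_j beta j * beta b * d%:R^-1 = (\sum_i beta i) ^+ 2 * d%:R^-1.
  rewrite expr2 !big_distrl /=; apply: eq_bigr => b _.
  by rewrite -!big_distrl /=; ring.
have -> : \sum_b \sum_j beta j * beta b * ((j == b)%:R * (1 - d%:R^-1)) =
          (\sum_i beta i ^+ 2) * (1 - d%:R^-1).
  rewrite big_distrl /=; apply: eq_bigr => b _.
  rewrite (bigD1 b) //= eqxx big1 ?addr0; first by rewrite mul1r expr2.
  by move=> j /negbTE ->; rewrite mul0r mulr0.
have -> : (\sum_i beta i) ^+ 2 = 1 - (d%:R - 1) * (\sum_i beta i ^+ 2).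
  by apply: (addrI ((d%:R - 1) * (\sum_i beta i ^+ 2))); rewrite norm1; ring.
by field.
Qed.

Lemma Tbeta_trace n (hN : (0 < n.+1)%N) (beta : 'I_n.+1 -> C) (X : 'M[C]_d) :
  (d%:R - 1) * (\sum_i beta i ^+ 2) + (\sum_i beta i) ^+ 2 = 1 ->
  \tr (Tbeta d hN beta X) = \tr X.
Proof.
move=> norm1; rewrite /Tbeta mxtraceZ mxtrace_ent -/(Tbeta_coef n.+1).
under eq_bigr => y _ do rewrite ent_sandwich_Pbeta sandwich_ampI_collapse.
rewrite -big_distrr sumrMnl /=.
have -> : \sum_(y : midx n.+1) \sum_b \sum_(r : 'S_n.+1)
    beta (r b) * beta b * X (y (r b)) (y b) *
    [forall m, (m != b) ==> (y (r m) == y m)]%:R =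
  \sum_b \sum_(r : 'S_n.+1) beta (r b) * beta b *
    \sum_(y : midx n.+1) X (y b) (y b) * (fixcol r y)%:R.
  rewrite exchange_big /=; apply: eq_bigr => b _.
  rewrite exchange_big /=; apply: eq_bigr => r _.
  by rewrite big_distrr /=; apply: eq_bigr => y _; rewrite -ampI_fixcol_weight mulrA.
under eq_bigr => b _ do rewrite sum_perm_diag_fixcol.
rewrite -big_distrr /= beta_pair_weight // sum_nfixcol // -[_ *+ n`!]mulr_natr.
transitivity (Tbeta_coef n.+1 * (((n.+1)`!%:R)^-1 * ((n.+1)`!%:R)^-1 * n`!%:R) *
  (n`! * 'C(n + d - 1, n))%:R / d%:R * \tr X); first by ring.
by rewrite Tbeta_trace_coef divff // mul1r.
Qed.

Lemma minsert_agree n (b : 'I_n.+1) i j (w1 w2 : midx n) :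
  [forall k, (k != b) ==> (minsert b i w1 k == minsert b j w2 k)] = (w1 == w2).
Proof.
apply/forallP/eqP => [agree|<- k].
  apply/ffunP => k; have := agree (lift b k).
  by rewrite !minsert_lift eq_sym neq_lift => /eqP.
apply/implyP => nkb; rewrite eq_sym in nkb.
by have [k0 -> _] := unlift_some nkb; rewrite !minsert_lift.
Qed.

Lemma ent_sandwich_ampI n (hN : (0 < n.+1)%N) (P : Op n.+1) (M : 'M[C]_d) y x :
  ent (P *m ampI hN M *m P^T) y x =
  \sum_(w : midx n) \sum_i \sum_j
     ent P y (minsert (Ordinal hN) i w) * M i j * ent P x (minsert (Ordinal hN) j w).
Proof.
set o := Ordinal hN; rewrite entM.
under eq_bigr => z _ do rewrite ent_trmx entM big_distrl /=.
rewrite exchange_big /= (sum_minsert o); apply: eq_bigr => w1 _.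
apply: eq_bigr => i _; rewrite (sum_minsert o).
rewrite (eq_bigr (fun w2 : midx n => \sum_j ent P y (minsert o i w1) * M i j *
    ent P x (minsert o j w2) * (w1 == w2)%:R)); last first.
  move=> w2 _; apply: eq_bigr => j _.
  by rewrite ent_ampI !minsert_b minsert_agree; ring.
rewrite (bigD1 w1) //= [X in _ + X]big1 ?addr0; last first.
  by move=> w2 nw; rewrite big1 // => j _; rewrite eq_sym (negbTE nw) mulr0.
by apply: eq_bigr => j _; rewrite eqxx mulr1.
Qed.

Lemma ent_Pbeta_real N (hN : (0 < N)%N) (beta : 'I_N -> C) y x :
  (forall i, beta i \is Num.real) -> ent (Pbeta d hN beta) y x \is Num.real.
Proof.
move=> beta_real; rewrite /Pbeta entZ ent_sum.
rewrite rpredM ?rpredV ?rpred_nat // rpred_sum // => s _.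
by rewrite entZ ent_Pi rpredM ?rpred_nat.
Qed.

(* id_k (x) K_w, where K_w : C^d -> (C^d)^(x)N consists of the columns of
   P_beta whose tensor factors other than the first one are set to w. *)
Definition kraus n (hN : (0 < n.+1)%N) (beta : 'I_n.+1 -> C) k (w : midx n) :
    'M[C]_(k * #|{: midx n.+1}|, k * d) :=
  \matrix_(p, a) (((mxtens_unindex p).1 == (mxtens_unindex a).1)%:R *
    ent (Pbeta d hN beta) (enum_val (mxtens_unindex p).2)
        (minsert (Ordinal hN) (mxtens_unindex a).2 w)).

Lemma krausE n (hN : (0 < n.+1)%N) (beta : 'I_n.+1 -> C) k (w : midx n) p a :
  kraus hN beta k w p a = (((mxtens_unindex p).1 == (mxtens_unindex a).1)%:R *
    ent (Pbeta d hN beta) (enum_val (mxtens_unindex p).2)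
        (minsert (Ordinal hN) (mxtens_unindex a).2 w)).
Proof. exact: mxE. Qed.

Lemma ampl_Tbeta_kraus n (hN : (0 < n.+1)%N) (beta : 'I_n.+1 -> C) k
    (X : 'M[C]_(k * d)) :
  (forall i, beta i \is Num.real) ->
  ampl (Tbeta d hN beta) X =
  Tbeta_coef n.+1 *: \sum_(w : midx n) (kraus hN beta k w *m X *m adjmx (kraus hN beta k w)).
Proof.
move=> beta_real; apply/matrixP => p q.
rewrite /ampl mxE /Tbeta [LHS]mxE [RHS]mxE summxE; congr (_ * _).
rewrite mxE_ent ent_sandwich_ampI; apply: eq_bigr => w _.
rewrite mxE sum_mxtens_index (bigD1 (mxtens_unindex q).1) //= [X in _ + X]big1 ?addr0;
  last first.
  move=> b1 nb; rewrite big1 // => b2 _.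
  by rewrite adjmxE krausE mxtens_indexK /= eq_sym (negbTE nb) mul0r rmorph0 mulr0.
rewrite exchange_big /=; apply: eq_bigr => j _.
rewrite adjmxE krausE mxtens_indexK eqxx mul1r conj_Creal ?ent_Pbeta_real //.
rewrite mxE sum_mxtens_index (bigD1 (mxtens_unindex p).1) //= [X in _ + X]big1 ?addr0;
  last first.
  move=> a1 na; rewrite big1 // => a2 _.
  by rewrite krausE mxtens_indexK eq_sym (negbTE na) !mul0r.
rewrite big_distrl /=; apply: eq_bigr => i _.
by rewrite krausE mxtens_indexK eqxx mul1r mxE.
Qed.

Lemma Tbeta_cp n (hN : (0 < n.+1)%N) (beta : 'I_n.+1 -> C) :
  (forall i, beta i \is Num.real) -> completely_positive (Tbeta d hN beta).
Proof.
move=> beta_real k X psdX; rewrite ampl_Tbeta_kraus //.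
apply: psdZ; first by rewrite divr_ge0 ?ler0n.
by apply: psd_sum => w _; apply: psd_congr.
Qed.

Lemma ampI_linear N (hN : (0 < N)%N) a (X Y : 'M[C]_d) :
  ampI hN (a *: X + Y) = a *: ampI hN X + ampI hN Y.
Proof.
by apply: op_ext => y x; rewrite entD entZ !ent_ampI !mxE mulrDl mulrA.
Qed.

Lemma Tbeta_linear N (hN : (0 < N)%N) (beta : 'I_N -> C) :
  linear_map (Tbeta d hN beta).
Proof.
move=> a X Y; rewrite /Tbeta ampI_linear mulmxDr mulmxDl -scalemxAr -scalemxAl.
by rewrite scalerDr !scalerA mulrC.
Qed.

End Tbeta.

Theorem mainTheorem13 (C : numClosedFieldType) (d N : nat)
  (hd : (2 <= d)%N) (hN : (0 < N)%N) (beta : 'I_N -> C) :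
  (forall i, beta i \is Num.real) ->
  (d%:R - 1) * (\sum_(i < N) beta i ^+ 2) + (\sum_(i < N) beta i) ^+ 2 = 1 ->
  quantum_channel (Tbeta d hN beta) /\ choi (Tbeta d hN beta) = Cbeta d beta.
Proof.
move=> beta_real norm1.
have d_gt0 : (0 < d)%N by apply: leq_trans hd.
case: N hN beta beta_real norm1 => [//|n] hN beta beta_real norm1.
split; first split.
- exact: Tbeta_linear.
- exact: Tbeta_cp.
- by move=> X; apply: Tbeta_trace.
- exact: choi_Tbeta.
Qed.
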